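(* Let $f:\mathcal{M}_1\to\mathcal{M}$ be a partial self-covering with $\mathcal{M}$ path connected, and consider $\mathrm{IMG}(f)$ as a self-similar group with respect to a standard action on $X^*$. Then the conjugate $\Lambda^{-1}\mathcal{V}_f\Lambda$ of $\mathcal{V}_f$ (acting on $X^\omega$ via the induced homeomorphism $\Lambda:X^\omega\to\partial T_t$) equals $\mathcal{V}_{\mathrm{IMG}(f)}$.
   Context: A partial self-covering is a finite degree covering $f:\mathcal{M}_1\to\mathcal{M}$ with $\mathcal{M}_1\subseteq\mathcal{M}$; iterates $f^n:\mathcal{M}_n\to\mathcal{M}$, $\mathcal{M}_{n+1}=f^{-1}(\mathcal{M}_n)$. For $t\in\mathcal{M}$, $T_t$ is the tree with vertices $\bigsqcup_{n\ge0}f^{-n}(t)$, $v$ joined to $f(v)$; for a path $\gamma$ from vertex $v$ to vertex $u$, $S_\gamma:\partial T_v\to\partial T_u$ is induced by sending $z\in f^{-k}(v)$ to the end of the lift of $\gamma$ by $f^k$ from $z$; $\mathcal{V}_f$ is the group of homeomorphisms $g$ of $\partial T_t$ for which there exist vertices $v_1,\dots,v_n$ with $\partial T_t=\bigsqcup\partial T_{v_i}$ and paths $\gamma_i$ from $v_i$ with $g=S_{\gamma_i}$ on $\partial T_{v_i}$. $\mathrm{IMG}(f)$ is the group of automorphisms $S_\gamma$ of $T_t$ for loops $\gamma$ at $t$. Standard action: with $f^{-1}(t)=\{t_1,\ldots,t_d\}$, $X=\{1,\ldots,d\}$ and chosen paths $\ell_i$ from $t$ to $t_i$, $\Lambda:X^*\to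 T_t$ is given by $\Lambda(\varnothing)=t$, $\Lambda(x_1\ldots x_n)=$ end of the lift of $\ell_{x_1}$ by $f^{n-1}$ starting at $\Lambda(x_2\ldots x_n)$; it is a rooted-tree isomorphism ($X^*$ with $v$ joined to $vx$) and induces a homeomorphism $X^\omega\to\partial T_t$; conjugating by it gives a self-similar action of $\mathrm{IMG}(f)$ on $X^*$. For a self-similar group $(G,X)$, $\mathcal{V}_G$ is the group of homeomorphisms $g$ of $X^\omega$ for which there exist complete antichains $A_1,A_2$ (finite sets of words, none a prefix of another, with $X^\omega=\bigsqcup_{v\in A_i}vX^\omega$), a bijection $\alpha:A_1\to A_2$ and $g_v\in G$ with $g(vw)=\alpha(v)g_v(w)$. *)

From Stdlib Require Import Reals List Arith ClassicalEpsilon.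
Import ListNotations.

Set Implicit Arguments.

Record Topology (T : Type) := {
  open : (T -> Prop) -> Prop;
  open_full : open (fun _ => True);
  open_inter : forall U V, open U -> open V -> open (fun x => U x /\ V x);
  open_union : forall (I : Type) (F : I -> T -> Prop),
      (forall i, open (F i)) -> open (fun x => exists i, F i x)
}.

Definition rel_open {T} (tau : Topology T) (S W : T -> Prop) : Prop :=
  exists U, open tau U /\ forall x, W x <-> (S x /\ U x).

Definition cont_on {T} (tau : Topology T) (S : T -> Prop) (f : T -> T) : Prop :=
  forall V, open tau V -> rel_open tau S (fun x => S x /\ V (f x)).

Definition is_path {T} (tau : Topology T) (S : T -> Prop) (g : R -> T) : Prop :=
  (forall s, (0 <= s <= 1)%R -> S (g s)) /\
  (forall V, open tau V -> forall s, (0 <= s <= 1)%R -> V (g s) ->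
     exists eps, (eps > 0)%R /\
       forall s', (0 <= s' <= 1)%R -> (Rabs (s' - s) < eps)%R -> V (g s')).

Definition path_connected {T} (tau : Topology T) : Prop :=
  forall x y, exists g, is_path tau (fun _ => True) g /\ g 0%R = x /\ g 1%R = y.

(* f : M1 -> M is a finite degree covering map, M1 a subset of M
   (with the subspace topology); f is given as a function on M whose
   values outside M1 are irrelevant. *)
Definition partial_self_covering {M} (tau : Topology M) (M1 : M -> Prop)
  (f : M -> M) : Prop :=
  cont_on tau M1 f /\
  (* every point has an evenly covered open neighbourhood *)
  (forall x, exists U, open tau U /\ U x /\
     exists (I : Type) (W : I -> M -> Prop),
       (forall i, rel_open tau M1 (W i) /\ (forall y, W i y -> M1 y)) /\
       (forall y, M1 y -> (U (f y) <-> exists i, W i y)) /\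
       (forall i j y, W i y -> W j y -> i = j) /\
       (forall i, (forall y, W i y -> U (f y)) /\
                  (forall u, U u -> exists y, W i y /\ f y = u) /\
                  (forall y y', W i y -> W i y' -> f y = f y' -> y = y') /\
                  (* the inverse of f|W_i is continuous, i.e. f|W_i is open *)
                  (forall V, rel_open tau (W i) V ->
                     rel_open tau U (fun u => exists y, V y /\ f y = u)))) /\
  (* finite degree *)
  (forall x, exists l : list M, forall y, (M1 y /\ f y = x) <-> In y l).

Fixpoint Mn {M} (M1 : M -> Prop) (f : M -> M) (n : nat) (x : M) : Prop :=
  match n with
  | 0 => True
  | S n' => M1 x /\ Mn M1 f n' (f x)
  end.

Definition Lift {M} (tau : Topology M) (M1 : M -> Prop) (f : M -> M)
  (k : nat) (g : R -> M) (z w : M) : Prop :=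
  exists dl : R -> M, is_path tau (Mn M1 f k) dl /\
    (forall s, (0 <= s <= 1)%R -> Nat.iter k f (dl s) = g s) /\
    dl 0%R = z /\ dl 1%R = w.

(* the (unique, by the path lifting property) endpoint of that lift *)
Definition liftEnd {M} (tau : Topology M) (M1 : M -> Prop) (f : M -> M)
  (k : nat) (g : R -> M) (z : M) : M :=
  epsilon (inhabits z) (Lift tau M1 f k g z).

(* vertex (n, v) of T_t : v in f^{-n}(t) *)
Definition is_vertex {M} (M1 : M -> Prop) (f : M -> M) (t : M) (n : nat) (v : M) :=
  Mn M1 f n v /\ Nat.iter n f v = t.

(* ends of T_t (points of the boundary), as sequences of vertices *)
Definition is_end {M} (M1 : M -> Prop) (f : M -> M) (t : M) (xi : nat -> M) :=
  xi 0 = t /\ forall k, M1 (xi (S k)) /\ f (xi (S k)) = xi k.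

Definition in_subtree_bd {M} (M1 : M -> Prop) (f : M -> M) (t : M)
  (n : nat) (v : M) (xi : nat -> M) :=
  is_end M1 f t xi /\ xi n = v.

(* S_gamma : boundary of T_(n,v) -> boundary of T_(m,u), gamma a path from v to u *)
Definition S_path {M} (tau : Topology M) (M1 : M -> Prop) (f : M -> M)
  (n m : nat) (u : M) (g : R -> M) (xi : nat -> M) : nat -> M :=
  fun j => if j <? m then Nat.iter (m - j) f u
           else liftEnd tau M1 f (j - m) g (xi (n + (j - m))).

Definition seq_cont {A} (D : (nat -> A) -> Prop) (g : (nat -> A) -> (nat -> A)) :=
  forall w, D w -> forall n, exists m, forall w', D w' ->
    (forall i, i < m -> w' i = w i) -> forall i, i < n -> g w' i = g w i.

Definition homeo_on {A} (D : (nat -> A) -> Prop) (g : (nat -> A) -> (nat -> A)) :=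
  (forall x, D x -> D (g x)) /\
  exists h, (forall x, D x -> D (h x)) /\
    (forall x, D x -> forall n, h (g x) n = x n) /\
    (forall x, D x -> forall n, g (h x) n = x n) /\
    seq_cont D g /\ seq_cont D h.

Record Piece (M : Type) := mkPiece {
  p_n : nat; p_v : M; p_m : nat; p_u : M; p_g : R -> M }.

Definition in_Vf {M} (tau : Topology M) (M1 : M -> Prop) (f : M -> M) (t : M)
  (h : (nat -> M) -> (nat -> M)) : Prop :=
  homeo_on (is_end M1 f t) h /\
  exists (k : nat) (P : nat -> Piece M),
    (forall i, i < k ->
       is_vertex M1 f t (p_n (P i)) (p_v (P i)) /\
       is_vertex M1 f t (p_m (P i)) (p_u (P i)) /\
       is_path tau (fun _ => True) (p_g (P i)) /\
       p_g (P i) 0%R = p_v (P i) /\ p_g (P i) 1%R = p_u (P i)) /\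
    (forall xi, is_end M1 f t xi ->
       exists i, i < k /\ in_subtree_bd M1 f t (p_n (P i)) (p_v (P i)) xi /\
         forall j, j < k -> in_subtree_bd M1 f t (p_n (P j)) (p_v (P j)) xi -> j = i) /\
    (forall i, i < k -> forall xi,
       in_subtree_bd M1 f t (p_n (P i)) (p_v (P i)) xi ->
       forall j, h xi j = S_path tau M1 f (p_n (P i)) (p_m (P i)) (p_u (P i)) (p_g (P i)) xi j).

Definition X (d : nat) := {i : nat | i < d}.

Fixpoint Lam {M} (tau : Topology M) (M1 : M -> Prop) (f : M -> M) (t : M)
  {d} (ell : X d -> R -> M) (w : list (X d)) : M :=
  match w with
  | [] => t
  | x :: rest => liftEnd tau M1 f (length rest) (ell x) (Lam tau M1 f t ell rest)
  end.

Definition LamInf {M} (tau : Topology M) (M1 : M -> Prop) (f : M -> M) (t : M)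
  {d} (ell : X d -> R -> M) (w : nat -> X d) : nat -> M :=
  fun n => Lam tau M1 f t ell (map w (seq 0 n)).

Fixpoint prepend {A} (v : list A) (w : nat -> A) : nat -> A :=
  match v with
  | [] => w
  | x :: v' => fun n => match n with 0 => x | S n' => prepend v' w n' end
  end.

Definition word_prefix {A} (v v' : list A) := exists r, v' = v ++ r.

Definition inf_prefix {A} (v : list A) (w : nat -> A) :=
  forall i, i < length v -> nth_error v i = Some (w i).

Definition complete_antichain {A} (Ac : list (list A)) :=
  (forall v v', In v Ac -> In v' Ac -> v <> v' -> ~ word_prefix v v') /\
  (forall w, exists v, In v Ac /\ inf_prefix v w).

(* g_v in IMG(f): the element of IMG(f) given by a loop gamma at t,
   acting on X^omega as Lambda^{-1} S_gamma Lambda *)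
Definition in_VIMG {M} (tau : Topology M) (M1 : M -> Prop) (f : M -> M) (t : M)
  {d} (ell : X d -> R -> M) (g : (nat -> X d) -> (nat -> X d)) : Prop :=
  homeo_on (fun _ => True) g /\
  exists (A1 A2 : list (list (X d))) (alpha : list (X d) -> list (X d)),
    complete_antichain A1 /\ complete_antichain A2 /\
    (forall v, In v A1 -> In (alpha v) A2) /\
    (forall v v', In v A1 -> In v' A1 -> alpha v = alpha v' -> v = v') /\
    (forall u, In u A2 -> exists v, In v A1 /\ alpha v = u) /\
    (forall v, In v A1 -> exists gam : R -> M,
       is_path tau (fun _ => True) gam /\ gam 0%R = t /\ gam 1%R = t /\
       forall w, exists z,
         (forall n, g (prepend v w) n = prepend (alpha v) z n) /\
         (forall n, LamInf tau M1 f t ell z n =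
                    S_path tau M1 f 0 0 t gam (LamInf tau M1 f t ell w) n)).

(* Lambda is a rooted-tree isomorphism X^* -> T_t (Lam_inj, Lam_surj); hence
   it identifies X^omega with the boundary of T_t, cylinders v X^omega with
   boundaries of subtrees T_(Lambda v), complete antichains with partitions of
   the boundary into subtrees.  The heart of the argument is a transport rule:
   writing delta(a) for the path from t to Lambda(a) obtained by concatenating
   lifts of the letters of a, a loop gamma at t acting on ends as w |-> z gives
   the path delta(a)^-1 gamma delta(b) acting as a w |-> b z, and conversely a
   path p from Lambda(a) to Lambda(b) is recovered from the loop
   delta(a) p delta(b)^-1 (transport_loop_action, close_path_action). *)

From Stdlib Require Import Reals List Arith ClassicalEpsilon.
From Stdlib Require Import Lra Lia Classical FunctionalExtensionality.
Import ListNotations.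

Section UnitInterval.
Local Open Scope R_scope.

Lemma unit_interval_induction (Q : R -> Prop) :
  (forall s, 0 <= s <= 1 -> (forall s', 0 <= s' < s -> Q s') ->
     exists eps, eps > 0 /\ forall s', 0 <= s' <= 1 -> s' < s + eps -> Q s') ->
  forall s, 0 <= s <= 1 -> Q s.
Proof.
  intros Hstep.
  set (E := fun x => 0 <= x <= 1 /\ forall s', 0 <= s' < x -> Q s').
  assert (Hbound : bound E) by (exists 1; intros x [Hx _]; lra).
  assert (Hne : exists x, E x) by (exists 0; split; [lra | intros; lra]).
  destruct (completeness E Hbound Hne) as [m [Hub Hlub]].
  assert (Hm0 : 0 <= m) by (apply Hub; split; [lra | intros; lra]).
  assert (Hm1 : m <= 1) by (apply Hlub; intros x [Hx _]; lra).
  assert (Hbelow : forall s', 0 <= s' < m -> Q s').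
  { intros s' Hs'. destruct (classic (exists x, E x /\ s' < x)) as [[x [[_ Hx] Hsx]] | Hno].
    - apply Hx; lra.
    - exfalso. assert (m <= s'); [| lra]. apply Hlub. intros x Ex.
      destruct (Rle_or_lt x s'); auto. exfalso; apply Hno; eauto. }
  destruct (Hstep m (conj Hm0 Hm1) Hbelow) as [eps [Heps HQ]].
  assert (Hm : m = 1).
  { destruct (Req_dec m 1) as [| Hneq]; auto. exfalso.
    pose proof (Rmin_l (m + eps / 2) 1). pose proof (Rmin_r (m + eps / 2) 1).
    assert (HE : E (Rmin (m + eps / 2) 1)).
    { split.
      - split; [unfold Rmin; destruct Rle_dec |]; lra.
      - intros s' Hs'. apply HQ; lra. }
    apply Hub in HE. unfold Rmin in HE; destruct Rle_dec in HE; lra. }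
  intros s Hs. apply HQ; lra.
Qed.

(* |a| < b as a pair of linear inequalities, the form lra can use. *)
Lemma Rabs_lt_iff a b : Rabs a < b <-> - b < a < b.
Proof.
  split.
  - intros H; apply Rabs_def2 in H; lra.
  - intros [H1 H2]; apply Rabs_def1; lra.
Qed.

End UnitInterval.

Section Paths.
Local Open Scope R_scope.
Context {M : Type} (tau : Topology M).

Definition pcont (a b : R) (g : R -> M) : Prop :=
  forall V, open tau V -> forall s, a <= s <= b -> V (g s) ->
    exists eps, eps > 0 /\
      forall s', a <= s' <= b -> Rabs (s' - s) < eps -> V (g s').

Lemma pcont_ext a b g g' :
  (forall s, a <= s <= b -> g s = g' s) -> pcont a b g -> pcont a b g'.
Proof.
  intros He Hg V HV s Hs HVs. rewrite <- He in HVs by exact Hs.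
  destruct (Hg V HV s Hs HVs) as [eps [Heps Hc]].
  exists eps; split; auto. intros s' Hs' Hd. rewrite <- He; auto.
Qed.

Lemma pcont_sub a b a' b' g : a <= a' -> b' <= b -> pcont a b g -> pcont a' b' g.
Proof.
  intros Ha Hb Hg V HV s Hs HVs. destruct (Hg V HV s ltac:(lra) HVs) as [eps [Heps Hc]].
  exists eps; split; auto. intros s' Hs' Hd. apply Hc; auto; lra.
Qed.

Lemma pcont_affine a b c d g :
  c > 0 -> pcont (c * a + d) (c * b + d) g -> pcont a b (fun s => g (c * s + d)).
Proof.
  intros Hc Hg V HV s Hs HVs.
  destruct (Hg V HV (c * s + d) ltac:(nra) HVs) as [eps [Heps Hcl]].
  exists (eps / c). split; [apply Rdiv_lt_0_compat; lra |].
  intros s' Hs' Hd. apply Rabs_lt_iff in Hd.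
  assert (Hprod : c * (eps / c) = eps) by (field; lra).
  apply Hcl; [nra |]. apply Rabs_lt_iff. nra.
Qed.

Lemma pcont_glue a m b g1 g2 :
  pcont a m g1 -> pcont m b g2 -> g1 m = g2 m ->
  pcont a b (fun s => if Rle_dec s m then g1 s else g2 s).
Proof.
  intros C1 C2 Em V HV s Hs HVs.
  destruct (Rtotal_order s m) as [Hl | [Heq | Hr]].
  - destruct Rle_dec in HVs; [| lra].
    destruct (C1 V HV s ltac:(lra) HVs) as [e [He Hc]].
    exists (Rmin e (m - s)). pose proof (Rmin_l e (m - s)). pose proof (Rmin_r e (m - s)).
    split; [apply Rmin_pos; lra |]. intros s' Hs' Hd. apply Rabs_lt_iff in Hd.
    destruct Rle_dec; [| lra]. apply Hc; [lra | apply Rabs_lt_iff; lra].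
  - subst s. destruct Rle_dec in HVs; [| lra].
    destruct (C1 V HV m ltac:(lra) HVs) as [e1 [He1 Hc1]].
    rewrite Em in HVs. destruct (C2 V HV m ltac:(lra) HVs) as [e2 [He2 Hc2]].
    exists (Rmin e1 e2). pose proof (Rmin_l e1 e2). pose proof (Rmin_r e1 e2).
    split; [apply Rmin_pos; lra |]. intros s' Hs' Hd. apply Rabs_lt_iff in Hd.
    destruct Rle_dec.
    + apply Hc1; [lra | apply Rabs_lt_iff; lra].
    + apply Hc2; [lra | apply Rabs_lt_iff; lra].
  - destruct Rle_dec in HVs; [lra |].
    destruct (C2 V HV s ltac:(lra) HVs) as [e [He Hc]].
    exists (Rmin e (s - m)). pose proof (Rmin_l e (s - m)). pose proof (Rmin_r e (s - m)).
    split; [apply Rmin_pos; lra |]. intros s' Hs' Hd. apply Rabs_lt_iff in Hd.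
    destruct Rle_dec; [lra |]. apply Hc; [lra | apply Rabs_lt_iff; lra].
Qed.

Lemma is_path_weaken S S' g :
  (forall x, S x -> S' x) -> is_path tau S g -> is_path tau S' g.
Proof. intros H [H1 H2]; split; auto. Qed.

Definition cpath (x : M) : R -> M := fun _ => x.
Definition rpath (g : R -> M) : R -> M := fun s => g (1 - s).
Definition ppath (g1 g2 : R -> M) : R -> M :=
  fun s => if Rle_dec s (1 / 2) then g1 (2 * s) else g2 (2 * s - 1).

Lemma is_path_const S x : S x -> is_path tau S (cpath x).
Proof.
  intros Hx; split; unfold cpath; auto.
  intros V HV s Hs HVs; exists 1; split; auto; lra.
Qed.

Lemma is_path_rev S g : is_path tau S g -> is_path tau S (rpath g).
Proof.
  intros [H1 H2]; split; unfold rpath.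
  - intros s Hs; apply H1; lra.
  - intros V HV s Hs HVs. destruct (H2 V HV (1 - s) ltac:(lra) HVs) as [eps [Heps Hc]].
    exists eps; split; auto. intros s' Hs' Hd. apply Hc; [lra |].
    replace (1 - s' - (1 - s)) with (- (s' - s)) by ring. rewrite Rabs_Ropp; auto.
Qed.

Lemma rpath_0 g : rpath g 0 = g 1.
Proof. unfold rpath; f_equal; ring. Qed.
Lemma rpath_1 g : rpath g 1 = g 0.
Proof. unfold rpath; f_equal; ring. Qed.
Lemma rpath_rpath g : rpath (rpath g) = g.
Proof. apply functional_extensionality; intros s; unfold rpath; f_equal; ring. Qed.

Lemma ppath_0 g1 g2 : ppath g1 g2 0 = g1 0.
Proof. unfold ppath; destruct Rle_dec; [f_equal; ring | lra]. Qed.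
Lemma ppath_1 g1 g2 : ppath g1 g2 1 = g2 1.
Proof. unfold ppath; destruct Rle_dec; [lra | f_equal; ring]. Qed.

Lemma is_path_cat S g1 g2 :
  is_path tau S g1 -> is_path tau S g2 -> g1 1 = g2 0 -> is_path tau S (ppath g1 g2).
Proof.
  intros [A1 C1] [A2 C2] E. split.
  - intros s Hs. unfold ppath; destruct Rle_dec; [apply A1 | apply A2]; lra.
  - apply pcont_glue.
    + apply (pcont_ext _ _ (fun s => g1 (2 * s + 0))); [intros; f_equal; ring |].
      apply pcont_affine; [lra |]. eapply pcont_sub; [| | exact C1]; lra.
    + apply (pcont_ext _ _ (fun s => g2 (2 * s + -1))); [intros; f_equal; ring |].
      apply pcont_affine; [lra |]. eapply pcont_sub; [| | exact C2]; lra.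
    + replace (2 * (1 / 2)) with 1 by field. replace (1 - 1) with 0 by ring. exact E.
Qed.

End Paths.

Section OneStepLifting.
Local Open Scope R_scope.
Context {M : Type} (tau : Topology M) (M1 : M -> Prop) (f : M -> M).
Hypothesis Hcov : partial_self_covering tau M1 f.

Lemma f_maps_path (S : M -> Prop) dl :
  (forall x, S x -> M1 x) -> is_path tau S dl ->
  is_path tau (fun y => exists x, S x /\ f x = y) (fun s => f (dl s)).
Proof.
  intros HS [A C]. destruct Hcov as [Hc _]. split.
  - intros s Hs; eauto.
  - intros V HV s Hs HVs. destruct (Hc V HV) as [U [HU HUi]].
    assert (HUs : U (dl s)) by (apply HUi; split; auto; apply HS, A, Hs).
    destruct (C U HU s Hs HUs) as [e [He Hcc]]. exists e; split; auto.
    intros s' Hs' Hd. apply HUi. auto.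
Qed.

(* Path lifting is unique: two lifts of e through f with the same starting
   point coincide.  By open induction, using that near any time both lifts
   stay in a single sheet, on which f is injective. *)
Lemma lift_step_unique (e : R -> M) dl1 dl2 :
  is_path tau M1 dl1 -> is_path tau M1 dl2 ->
  (forall s, 0 <= s <= 1 -> f (dl1 s) = e s) ->
  (forall s, 0 <= s <= 1 -> f (dl2 s) = e s) ->
  dl1 0 = dl2 0 -> forall s, 0 <= s <= 1 -> dl1 s = dl2 s.
Proof.
  intros [A1 C1] [A2 C2] E1 E2 H0. apply unit_interval_induction.
  intros s Hs Hbelow. destruct Hcov as [_ [Hev _]].
  destruct (Hev (e s)) as [U [HU [HUs [Idx [W [HW1 [HW2 [HW3 HW4]]]]]]]].
  destruct (proj1 (HW2 (dl1 s) (A1 s Hs)) ltac:(rewrite E1; auto)) as [i Hi].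
  destruct (proj1 (HW2 (dl2 s) (A2 s Hs)) ltac:(rewrite E2; auto)) as [j Hj].
  destruct (HW1 i) as [[Oi [HOi HOi']] _]. destruct (HW1 j) as [[Oj [HOj HOj']] _].
  destruct (C1 Oi HOi s Hs ltac:(apply HOi'; auto)) as [e1 [He1 Hc1]].
  destruct (C2 Oj HOj s Hs ltac:(apply HOj'; auto)) as [e2 [He2 Hc2]].
  set (eps := Rmin e1 e2). assert (Heps : eps > 0) by (apply Rmin_pos; auto).
  pose proof (Rmin_l e1 e2) as Hm1. pose proof (Rmin_r e1 e2) as Hm2. fold eps in Hm1, Hm2.
  assert (Hin1 : forall s', 0 <= s' <= 1 -> Rabs (s' - s) < eps -> W i (dl1 s'))
    by (intros s' Hs' Hd; apply HOi'; split; [apply A1 | apply Hc1]; auto; lra).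
  assert (Hin2 : forall s', 0 <= s' <= 1 -> Rabs (s' - s) < eps -> W j (dl2 s'))
    by (intros s' Hs' Hd; apply HOj'; split; [apply A2 | apply Hc2]; auto; lra).
  assert (Hsame_sheet : i = j).
  { set (s1 := Rmax 0 (s - eps / 2)).
    assert (Hs1 : 0 <= s1 <= s /\ Rabs (s1 - s) < eps).
    { unfold s1, Rmax; destruct Rle_dec; (split; [split; lra | apply Rabs_lt_iff; lra]). }
    assert (Heq : dl1 s1 = dl2 s1).
    { destruct (Rlt_or_le s1 s). apply Hbelow; lra.
      replace s1 with 0 by (unfold s1, Rmax in *; destruct Rle_dec; lra). auto. }
    apply (HW3 i j (dl1 s1)); [| rewrite Heq]; [apply Hin1 | apply Hin2]; lra. }
  subst j. exists eps. split; auto. intros s' Hs' Hlt.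
  destruct (Rlt_or_le s' s) as [Hl | Hl]; [apply Hbelow; lra |].
  assert (Hd : Rabs (s' - s) < eps) by (apply Rabs_lt_iff; lra).
  destruct (HW4 i) as [_ [_ [Hinj _]]]. apply Hinj; auto. rewrite E1, E2; auto.
Qed.

Definition sheet_over (U W : M -> Prop) : Prop :=
  (forall y, W y -> M1 y) /\ (forall u, U u -> exists y, W y /\ f y = u) /\
  (forall y y', W y -> W y' -> f y = f y' -> y = y') /\
  (forall V, rel_open tau W V -> rel_open tau U (fun u => exists y, V y /\ f y = u)).

(* The inverse of f on a sheet (z is an arbitrary default value). *)
Definition sheet_section (W : M -> Prop) (z u : M) : M :=
  epsilon (inhabits z) (fun y => W y /\ f y = u).

Lemma sheet_section_spec U W z u : sheet_over U W -> U u ->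
  W (sheet_section W z u) /\ f (sheet_section W z u) = u.
Proof. intros [_ [Hsurj _]] Hu. unfold sheet_section. apply epsilon_spec, Hsurj, Hu. Qed.

Lemma sheet_section_pcont U W z e a b :
  open tau U -> is_path tau (fun _ => True) e -> sheet_over U W ->
  0 <= a -> b <= 1 -> (forall r, a <= r <= b -> U (e r)) ->
  pcont tau a b (fun r => sheet_section W z (e r)).
Proof.
  intros HU [_ Ce] Hsh Ha Hb HUe V HV r Hr HVr.
  pose proof Hsh as [_ [_ [Hinj Hopen]]].
  destruct (Hopen (fun y => W y /\ V y)) as [O [HO HOi]]; [exists V; split; auto; tauto |].
  assert (Hr' : U (e r) /\ O (e r)).
  { apply HOi. exists (sheet_section W z (e r)).
    split; [split |]; auto; apply (sheet_section_spec U); auto. }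
  destruct (Ce _ (open_inter tau _ _ HU HO) r ltac:(lra) Hr') as [eps [Heps Hc]].
  exists eps; split; auto. intros r' Hr1 Hd.
  destruct (Hc r' ltac:(lra) Hd) as [HU' HO'].
  destruct (proj2 (HOi (e r')) (conj HU' HO')) as [y [[Wy Vy] Hfy]].
  destruct (sheet_section_spec U W z (e r') Hsh HU').
  replace (sheet_section W z (e r')) with y; auto. apply Hinj; congruence.
Qed.

Definition lift_upto (e dl : R -> M) (x : R) : Prop :=
  (forall s, 0 <= s <= x -> M1 (dl s) /\ f (dl s) = e s) /\ pcont tau 0 x dl.

Lemma lift_extend U W e dl s1 x :
  open tau U -> is_path tau (fun _ => True) e -> sheet_over U W ->
  0 <= s1 -> x <= 1 -> (forall r, s1 <= r <= x -> U (e r)) -> U (e s1) ->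
  lift_upto e dl s1 -> W (dl s1) -> exists dl', dl' 0 = dl 0 /\ lift_upto e dl' x.
Proof.
  intros HU He Hsh Hs1 Hx HUe HUs1 [Hdl Cdl] Hw.
  set (sig := sheet_section W (dl s1)).
  assert (Hsig1 : dl s1 = sig (e s1)).
  { destruct (sheet_section_spec U W (dl s1) (e s1) Hsh HUs1) as [Hw' Hf'].
    apply (proj1 (proj2 (proj2 Hsh))); auto. rewrite (proj2 (Hdl s1 ltac:(lra))). auto. }
  exists (fun r => if Rle_dec r s1 then dl r else sig (e r)). split; [| split].
  - destruct Rle_dec; [auto | lra].
  - intros r Hr. destruct Rle_dec; [apply Hdl; lra |].
    destruct (sheet_section_spec U W (dl s1) (e r) Hsh (HUe r ltac:(lra))) as [Hw' Hf'].
    split; auto. apply (proj1 Hsh); auto.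
  - apply pcont_glue; auto. apply (sheet_section_pcont U); auto.
Qed.

(* By open induction: a lift on [0,s1] with s1 just below s extends across
   the evenly covered neighbourhood of e s along the sheet through dl s1. *)
Lemma lift_step_exists (e : R -> M) z :
  is_path tau (fun _ => True) e -> M1 z -> f z = e 0 ->
  exists dl, is_path tau M1 dl /\ (forall s, 0 <= s <= 1 -> f (dl s) = e s) /\ dl 0 = z.
Proof.
  intros He Hz Hfz.
  assert (Hall : forall x, 0 <= x <= 1 -> exists dl, dl 0 = z /\ lift_upto e dl x).
  2:{ destruct (Hall 1 ltac:(lra)) as [dl [H0 [Hl Hc]]].
      exists dl. split; [split | split]; auto; intros s Hs; apply Hl; auto. }
  apply unit_interval_induction. intros s Hs Hbelow.
  destruct Hcov as [_ [Hev _]].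
  destruct (Hev (e s)) as [U [HU [HUs [Idx [W [HW1 [HW2 [_ HW4]]]]]]]].
  assert (Hsheet : forall i, sheet_over U (W i)) by (intros i; split; [apply HW1 | apply HW4]).
  destruct (proj2 He U HU s Hs HUs) as [e0 [He0 Hce]].
  set (s1 := Rmax 0 (s - e0 / 2)).
  assert (Hs1 : 0 <= s1 <= s /\ s - e0 / 2 <= s1)
    by (unfold s1, Rmax; destruct Rle_dec; (split; [split |]; lra)).
  assert (HUnear : forall r, 0 <= r <= 1 -> s - e0 / 2 <= r < s + e0 / 2 -> U (e r))
    by (intros r Hr Hr'; apply Hce; [lra | apply Rabs_lt_iff; lra]).
  assert (Hlift_s1 : exists dl, dl 0 = z /\ lift_upto e dl s1).
  { destruct (Rlt_or_le s1 s); [apply Hbelow; lra |].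
    exists (cpath z). split; auto.
    replace s1 with 0 by (unfold s1, Rmax in *; destruct Rle_dec; lra). split.
    - intros r Hr. unfold cpath. replace r with 0 by lra. auto.
    - apply (pcont_sub tau 0 1); try lra. exact (proj2 (is_path_const tau (fun _ => True) z I)). }
  destruct Hlift_s1 as [dl [Hdl0 Hdl]].
  destruct (proj1 Hdl s1 ltac:(lra)) as [HM1 Hf1].
  destruct (proj1 (HW2 _ HM1) ltac:(rewrite Hf1; apply HUnear; lra)) as [i Hi].
  exists (e0 / 2). split; [lra |]. intros x Hx Hxlt.
  rewrite <- Hdl0. apply (lift_extend U (W i) e dl s1); auto; try lra.
  - intros r Hr. apply HUnear; lra.
  - apply HUnear; lra.
Qed.

End OneStepLifting.

Section Vertices.
Context {M : Type} (M1 : M -> Prop) (f : M -> M).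

Lemma iter_swap k x : Nat.iter k f (f x) = f (Nat.iter k f x).
Proof. induction k; simpl; congruence. Qed.

Lemma iter_add k j x : Nat.iter (k + j) f x = Nat.iter j f (Nat.iter k f x).
Proof. revert x; induction k; intros x; simpl; [| rewrite IHk, iter_swap]; reflexivity. Qed.

Lemma Mn_add k j x : Mn M1 f (k + j) x <-> Mn M1 f k x /\ Mn M1 f j (Nat.iter k f x).
Proof. revert x; induction k; intros x; simpl; [| rewrite IHk, iter_swap]; tauto. Qed.

Lemma is_vertex_trans x y k j z :
  is_vertex M1 f y k z -> is_vertex M1 f x j y -> is_vertex M1 f x (k + j) z.
Proof.
  intros [Hz Ez] [Hy Ey]. split.
  - apply Mn_add. rewrite Ez. auto.
  - rewrite iter_add, Ez. auto.
Qed.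

Lemma is_vertex_split x k j z :
  is_vertex M1 f x (k + j) z -> is_vertex M1 f (Nat.iter k f z) k z /\ is_vertex M1 f x j (Nat.iter k f z).
Proof. intros [Hz Ez]. apply Mn_add in Hz. rewrite iter_add in Ez. split; split; tauto. Qed.

Lemma is_vertex_f k x z : is_vertex M1 f x (S k) z -> is_vertex M1 f x k (f z).
Proof. intros [[_ Hz] E]. split; auto. rewrite iter_swap; auto. Qed.

Lemma end_vertex_down t xi :
  is_end M1 f t xi -> forall n k, is_vertex M1 f (xi n) k (xi (n + k)%nat).
Proof.
  intros [H0 HS] n k. induction k as [| k [IH1 IH2]].
  - rewrite Nat.add_0_r. split; simpl; auto.
  - replace (n + S k)%nat with (S (n + k)) by lia. destruct (HS (n + k)%nat) as [A B].
    split; simpl; [rewrite B | rewrite <- iter_swap, B]; auto.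
Qed.

Lemma end_vertex t xi :
  is_end M1 f t xi -> forall n, is_vertex M1 f t n (xi n).
Proof. intros H n. pose proof (end_vertex_down t xi H 0 n) as V. destruct H as [<- _]. exact V. Qed.

End Vertices.

Section IteratedLifting.
Local Open Scope R_scope.
Context {M : Type} (tau : Topology M) (M1 : M -> Prop) (f : M -> M).
Hypothesis Hcov : partial_self_covering tau M1 f.

Local Notation path g := (is_path tau (fun _ => True) g).
Local Notation lend := (liftEnd tau M1 f).

Lemma f_path_Mn k dl :
  is_path tau (Mn M1 f (S k)) dl -> is_path tau (Mn M1 f k) (fun s => f (dl s)).
Proof.
  intros H. eapply is_path_weaken; [| apply (f_maps_path tau M1 f Hcov (Mn M1 f (S k)))]; auto.
  - intros y [x [[_ Hx] <-]]; auto.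
  - intros x [Hx _]; auto.
Qed.

Definition lift_path k (g dl : R -> M) z : Prop :=
  is_path tau (Mn M1 f k) dl /\ (forall s, 0 <= s <= 1 -> Nat.iter k f (dl s) = g s) /\ dl 0 = z.

Lemma Lift_iff k g z w : Lift tau M1 f k g z w <-> exists dl, lift_path k g dl z /\ dl 1 = w.
Proof. unfold Lift, lift_path. split; intros [dl H]; exists dl; tauto. Qed.

Lemma lift_path_exists k : forall g z, path g -> is_vertex M1 f (g 0) k z ->
  exists dl, lift_path k g dl z.
Proof.
  induction k as [| k IH]; intros g z Hg Hz.
  - exists g. destruct Hz as [_ Hz]. split; [eapply is_path_weaken; [| eauto] | split]; simpl; auto.
  - destruct (IH g (f z) Hg (is_vertex_f M1 f k (g 0) z Hz)) as [e [He [He1 He2]]].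
    assert (He' : path e) by (eapply is_path_weaken; [| eauto]; auto).
    destruct (lift_step_exists tau M1 f Hcov e z He' (proj1 (proj1 Hz)) (eq_sym He2))
      as [dl [Hd [Hd1 Hd2]]].
    exists dl. split; [| split]; auto.
    + destruct Hd as [A C]. split; auto. intros s Hs. split; auto. rewrite Hd1; auto. apply He; auto.
    + intros s Hs. simpl. rewrite <- iter_swap, Hd1; auto.
Qed.

(* Uniqueness of lifts by f^k, from the one-step case applied to f o dl. *)
Lemma lift_path_unique k : forall g dl1 dl2 z, lift_path k g dl1 z -> lift_path k g dl2 z ->
  forall s, 0 <= s <= 1 -> dl1 s = dl2 s.
Proof.
  induction k as [| k IH]; intros g dl1 dl2 z [P1 [E1 Z1]] [P2 [E2 Z2]].
  - intros s Hs. simpl in *. rewrite E1, E2; auto.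
  - assert (Hbelow : forall s, 0 <= s <= 1 -> f (dl1 s) = f (dl2 s)).
    { apply (IH g _ _ (f z)).
      - split; [apply f_path_Mn; auto | split; [| congruence]].
        intros s Hs. rewrite iter_swap. apply E1; auto.
      - split; [apply f_path_Mn; auto | split; [| congruence]].
        intros s Hs. rewrite iter_swap. apply E2; auto. }
    apply (lift_step_unique tau M1 f Hcov (fun s => f (dl1 s))); auto.
    + eapply is_path_weaken; [| eauto]. intros x [Hx _]; auto.
    + eapply is_path_weaken; [| eauto]. intros x [Hx _]; auto.
    + intros s Hs. symmetry; auto.
    + congruence.
Qed.

Lemma Lift_unique k g z w1 w2 : Lift tau M1 f k g z w1 -> Lift tau M1 f k g z w2 -> w1 = w2.
Proof.
  rewrite !Lift_iff. intros [d1 [H1 <-]] [d2 [H2 <-]]. eapply lift_path_unique; eauto. lra.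
Qed.

Lemma liftEnd_eq k g z w : Lift tau M1 f k g z w -> lend k g z = w.
Proof. intros H. apply (Lift_unique k g z); auto. unfold liftEnd. apply epsilon_spec. eauto. Qed.

Lemma liftEnd_Lift k g z : path g -> is_vertex M1 f (g 0) k z -> Lift tau M1 f k g z (lend k g z).
Proof.
  intros Hg Hz. destruct (lift_path_exists k g z Hg Hz) as [dl Hdl].
  rewrite (liftEnd_eq k g z (dl 1)); apply Lift_iff; eauto.
Qed.

Lemma Lift_end k g z w : Lift tau M1 f k g z w -> is_vertex M1 f (g 1) k w.
Proof. intros [dl [[A _] [E [_ <-]]]]. split; [apply A | apply E]; lra. Qed.

Lemma liftEnd_vertex k g z : path g -> is_vertex M1 f (g 0) k z -> is_vertex M1 f (g 1) k (lend k g z).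
Proof. intros. apply (Lift_end k g z), liftEnd_Lift; auto. Qed.

Lemma Lift_cat k g1 g2 z w1 w2 : Lift tau M1 f k g1 z w1 -> Lift tau M1 f k g2 w1 w2 ->
  Lift tau M1 f k (ppath g1 g2) z w2.
Proof.
  intros [d1 [P1 [E1 [Z1 W1]]]] [d2 [P2 [E2 [Z2 W2]]]].
  exists (ppath d1 d2). split; [| split; [| split]].
  - apply is_path_cat; auto. congruence.
  - intros s Hs. unfold ppath. destruct Rle_dec; [apply E1 | apply E2]; lra.
  - rewrite ppath_0; auto.
  - rewrite ppath_1; auto.
Qed.

Lemma Lift_rev k g z w : Lift tau M1 f k g z w -> Lift tau M1 f k (rpath g) w z.
Proof.
  intros [d [P [E [Z W]]]]. exists (rpath d). split; [| split; [| split]].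
  - apply is_path_rev; auto.
  - intros s Hs. unfold rpath. apply E; lra.
  - rewrite rpath_0; auto.
  - rewrite rpath_1; auto.
Qed.

Lemma Lift_S k g z w : Lift tau M1 f (S k) g z w -> Lift tau M1 f k g (f z) (f w).
Proof.
  intros [d [P [E [Z W]]]]. exists (fun s => f (d s)). split; [| split; [| split]].
  - apply f_path_Mn; auto.
  - intros s Hs. rewrite iter_swap. apply E; auto.
  - congruence.
  - congruence.
Qed.

Lemma Lift_const k z : Mn M1 f k z -> Lift tau M1 f k (cpath (Nat.iter k f z)) z z.
Proof. intros Hz. exists (cpath z). split; [apply is_path_const; auto | split; auto]. Qed.

Lemma Lift_0 g : path g -> Lift tau M1 f 0 g (g 0) (g 1).
Proof. intros Hg. exists g. split; [| split; [| split]]; auto. Qed.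

Lemma Lift_comp j k g z lam y y' : lift_path j g lam z -> Lift tau M1 f k lam y y' ->
  Lift tau M1 f (k + j) g y y'.
Proof.
  intros [PL [EL ZL]] [d [[A C] [E [Z W]]]]. exists d. split; [| split; [| split]]; auto.
  - split; auto. intros s Hs. apply Mn_add. split; [apply A | rewrite E; [apply PL |]]; auto.
  - intros s Hs. rewrite iter_add, E; auto.
Qed.

Lemma liftEnd_cat k g1 g2 z : path g1 -> path g2 -> g1 1 = g2 0 -> is_vertex M1 f (g1 0) k z ->
  lend k (ppath g1 g2) z = lend k g2 (lend k g1 z).
Proof.
  intros P1 P2 E Hz. apply liftEnd_eq.
  eapply Lift_cat; [apply liftEnd_Lift; auto |]. apply liftEnd_Lift; auto.
  rewrite <- E. apply liftEnd_vertex; auto.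
Qed.

Lemma liftEnd_cat3 k g1 g2 g3 z : path g1 -> path g2 -> path g3 ->
  g1 1 = g2 0 -> g2 1 = g3 0 -> is_vertex M1 f (g1 0) k z ->
  lend k (ppath (ppath g1 g2) g3) z = lend k g3 (lend k g2 (lend k g1 z)).
Proof.
  intros P1 P2 P3 E1 E2 Hz. rewrite !liftEnd_cat; auto.
  - apply is_path_cat; auto.
  - rewrite ppath_1; auto.
  - rewrite ppath_0; auto.
Qed.

Lemma liftEnd_rev k g z : path g -> is_vertex M1 f (g 0) k z -> lend k (rpath g) (lend k g z) = z.
Proof. intros. apply liftEnd_eq, Lift_rev, liftEnd_Lift; auto. Qed.

Lemma liftEnd_rev' k g z : path g -> is_vertex M1 f (g 1) k z -> lend k g (lend k (rpath g) z) = z.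
Proof.
  intros P Hz. rewrite <- (rpath_rpath g) at 1. apply liftEnd_rev.
  - apply is_path_rev; auto.
  - rewrite rpath_0; auto.
Qed.

Definition lpath k g z : R -> M := epsilon (inhabits (cpath z)) (fun dl => lift_path k g dl z).

Lemma lpath_spec k g z : path g -> is_vertex M1 f (g 0) k z ->
  lift_path k g (lpath k g z) z /\ lpath k g z 1 = lend k g z.
Proof.
  intros Hg Hz. destruct (lift_path_exists k g z Hg Hz) as [dl Hdl].
  assert (HP : lift_path k g (lpath k g z) z) by (unfold lpath; apply epsilon_spec; eauto).
  split; auto. symmetry. apply liftEnd_eq, Lift_iff. eauto.
Qed.

End IteratedLifting.

Section PathTransport.
Local Open Scope R_scope.
Context {M : Type} (tau : Topology M) (M1 : M -> Prop) (f : M -> M).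
Hypothesis Hcov : partial_self_covering tau M1 f.
Context (t : M).

Local Notation path g := (is_path tau (fun _ => True) g).
Local Notation lend := (liftEnd tau M1 f).
Local Notation Sg := (S_path tau M1 f).

Lemma S_path_lt n m u g xi j : (j < m)%nat -> Sg n m u g xi j = Nat.iter (m - j) f u.
Proof. intros H. unfold S_path. destruct (Nat.ltb_spec j m); [auto | lia]. Qed.

Lemma S_path_ge n m u g xi j : (m <= j)%nat -> Sg n m u g xi j = lend (j - m) g (xi (n + (j - m))%nat).
Proof. intros H. unfold S_path. destruct (Nat.ltb_spec j m); [lia | auto]. Qed.

Lemma S_path_end n m u g xi : is_end M1 f t xi -> is_vertex M1 f t m u ->
  path g -> g 0 = xi n -> g 1 = u ->
  is_end M1 f t (Sg n m u g xi) /\ Sg n m u g xi m = u.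
Proof.
  intros He [Hu1 Hu2] Hg Hg0 Hg1.
  assert (HL : forall k, Lift tau M1 f k g (xi (n + k)%nat) (lend k g (xi (n + k)%nat))).
  { intros k. apply (liftEnd_Lift tau M1 f Hcov); auto. rewrite Hg0. apply (end_vertex_down M1 f t); auto. }
  assert (Hm : Sg n m u g xi m = u).
  { rewrite S_path_ge, Nat.sub_diag by lia. destruct (Lift_end tau M1 f _ _ _ _ (HL 0%nat)) as [_ E].
    simpl in E. congruence. }
  split; auto. split.
  - destruct m as [| m]; [rewrite Hm; auto | rewrite S_path_lt by lia; auto].
  - intros j. destruct (Nat.lt_ge_cases (S j) m) as [H1 | H1].
    + rewrite !S_path_lt by lia.
      replace m with ((m - S j) + S j)%nat in Hu1 at 1 by lia. apply Mn_add in Hu1.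
      destruct Hu1 as [_ [Hu1 _]]. split; auto.
      replace (m - j)%nat with (S (m - S j)) by lia. reflexivity.
    + destruct (Nat.eq_dec (S j) m) as [E | E].
      * subst m. rewrite Hm, S_path_lt by lia.
        destruct Hu1 as [Hu1 _]. split; auto. replace (S j - j)%nat with 1%nat by lia. reflexivity.
      * rewrite !S_path_ge by lia. replace (S j - m)%nat with (S (j - m)) by lia.
        pose proof (HL (S (j - m))) as HL1. destruct (Lift_end tau M1 f _ _ _ _ HL1) as [[A _] _].
        split; auto. apply (Lift_S tau M1 f Hcov) in HL1.
        destruct He as [_ HS]. replace (n + S (j - m))%nat with (S (n + (j - m))) in * by lia.
        rewrite (proj2 (HS _)) in HL1. symmetry. apply (liftEnd_eq tau M1 f Hcov). auto.
Qed.

Lemma S_path_rev n m u g xi : is_end M1 f t xi -> path g -> g 0 = xi n ->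
  forall j, Sg m n (xi n) (rpath g) (Sg n m u g xi) j = xi j.
Proof.
  intros He Hg Hg0 j. destruct (Nat.lt_ge_cases j n) as [H | H].
  - rewrite S_path_lt by auto. destruct (end_vertex_down M1 f t xi He j (n - j)) as [_ B].
    replace (j + (n - j))%nat with n in B by lia. auto.
  - rewrite !S_path_ge by lia.
    replace (m + (j - n) - m)%nat with (j - n)%nat by lia.
    rewrite (liftEnd_rev tau M1 f Hcov); [f_equal; lia | auto |].
    rewrite Hg0. apply (end_vertex_down M1 f t); auto.
Qed.

Definition boundary_partition k (n : nat -> nat) (v : nat -> M) : Prop :=
  forall xi, is_end M1 f t xi -> exists i, (i < k)%nat /\ in_subtree_bd M1 f t (n i) (v i) xi /\
    forall j, (j < k)%nat -> in_subtree_bd M1 f t (n j) (v j) xi -> j = i.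

Definition valid_piece (p : Piece M) : Prop :=
  is_vertex M1 f t (p_n p) (p_v p) /\ is_vertex M1 f t (p_m p) (p_u p) /\
  path (p_g p) /\ p_g p 0 = p_v p /\ p_g p 1 = p_u p.

Definition piece_map (p : Piece M) : (nat -> M) -> nat -> M := Sg (p_n p) (p_m p) (p_u p) (p_g p).

Lemma piece_map_into p xi : valid_piece p -> in_subtree_bd M1 f t (p_n p) (p_v p) xi ->
  in_subtree_bd M1 f t (p_m p) (p_u p) (piece_map p xi).
Proof. intros [_ [Vu [Pg [G0 G1]]]] [He Hv]. apply S_path_end; congruence. Qed.

Lemma piece_map_onto p xi : valid_piece p -> in_subtree_bd M1 f t (p_m p) (p_u p) xi ->
  exists eta, in_subtree_bd M1 f t (p_n p) (p_v p) eta /\ piece_map p eta = xi.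
Proof.
  intros [Vv [_ [Pg [G0 G1]]]] [He Hu].
  assert (R0 : rpath (p_g p) 0 = xi (p_m p)) by (rewrite rpath_0; congruence).
  destruct (S_path_end (p_m p) (p_n p) (p_v p) (rpath (p_g p)) xi He Vv (is_path_rev tau _ _ Pg)
              R0 ltac:(rewrite rpath_1; auto)) as [E1 E2].
  eexists. split; [split; eauto |].
  apply functional_extensionality; intros j. unfold piece_map.
  rewrite <- (rpath_rpath (p_g p)), <- Hu at 1. apply S_path_rev; auto. apply is_path_rev; auto.
Qed.

Lemma target_partition k (P : nat -> Piece M) h hi :
  (forall i, (i < k)%nat -> valid_piece (P i)) ->
  (forall xi, is_end M1 f t xi -> is_end M1 f t (hi xi)) ->
  (forall xi, is_end M1 f t xi -> h (hi xi) = xi) ->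
  (forall xi, is_end M1 f t xi -> hi (h xi) = xi) ->
  (forall i, (i < k)%nat -> forall xi, in_subtree_bd M1 f t (p_n (P i)) (p_v (P i)) xi ->
     h xi = piece_map (P i) xi) ->
  boundary_partition k (fun i => p_n (P i)) (fun i => p_v (P i)) ->
  boundary_partition k (fun i => p_m (P i)) (fun i => p_u (P i)).
Proof.
  intros HP Hhie Hhhi Hhih Hpiece Hpart xi Hxi.
  assert (Hpre : forall i, (i < k)%nat -> in_subtree_bd M1 f t (p_m (P i)) (p_u (P i)) xi ->
                   in_subtree_bd M1 f t (p_n (P i)) (p_v (P i)) (hi xi)).
  { intros i Hi Si. destruct (piece_map_onto (P i) xi (HP i Hi) Si) as [eta [Seta Eeta]].
    rewrite <- Eeta, <- Hpiece, Hhih by (auto; apply Seta). exact Seta. }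
  destruct (Hpart (hi xi) (Hhie xi Hxi)) as [i [Hi [Si Uniq]]].
  exists i. split; [auto | split].
  - rewrite <- (Hhhi xi Hxi), (Hpiece i) by auto. apply piece_map_into; auto.
  - intros j Hj Sj. apply Uniq; auto.
Qed.

End PathTransport.

Section Words.
Context {A : Type}.

Lemma inf_prefix_map (a : list A) w : inf_prefix a w <-> map w (seq 0 (length a)) = a.
Proof.
  unfold inf_prefix. split.
  - intros H. apply nth_error_ext. intros i. destruct (Nat.lt_ge_cases i (length a)) as [Hi | Hi].
    + rewrite H, nth_error_map, nth_error_seq by auto.
      destruct (Nat.ltb_spec i (length a)); [auto | lia].
    + rewrite (proj2 (nth_error_None a i) Hi). apply nth_error_None.
      rewrite length_map, length_seq. auto.
  - intros H i Hi. rewrite <- H, nth_error_map, nth_error_seq.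
    destruct (Nat.ltb_spec i (length a)); [auto | lia].
Qed.

Lemma prefix_inf (a b : list A) w : word_prefix a b -> inf_prefix b w -> inf_prefix a w.
Proof.
  intros [r ->] H i Hi. rewrite <- H by (rewrite length_app; lia).
  rewrite nth_error_app1; auto.
Qed.

Lemma prefix_cmp (a b : list A) w :
  inf_prefix a w -> inf_prefix b w -> word_prefix a b \/ word_prefix b a.
Proof.
  assert (Hsplit : forall m n, (m <= n)%nat ->
            map w (seq 0 n) = map w (seq 0 m) ++ map w (seq m (n - m))).
  { intros m n Hmn. rewrite <- map_app. f_equal.
    replace m with (0 + m)%nat at 2 by lia. rewrite <- seq_app. f_equal. lia. }
  rewrite !inf_prefix_map. intros Ha Hb.
  destruct (Nat.le_ge_cases (length a) (length b)) as [H | H].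
  - left. exists (map w (seq (length a) (length b - length a))).
    rewrite <- Hb at 1. rewrite (Hsplit (length a)), Ha by auto. reflexivity.
  - right. exists (map w (seq (length b) (length a - length b))).
    rewrite <- Ha at 1. rewrite (Hsplit (length b)), Hb by auto. reflexivity.
Qed.

Lemma antichain_eq (Ac : list (list A)) a b w : complete_antichain Ac -> In a Ac -> In b Ac ->
  inf_prefix a w -> inf_prefix b w -> a = b.
Proof.
  intros [HA _] Ha Hb Hpa Hpb. destruct (classic (a = b)) as [E | E]; auto.
  exfalso. destruct (prefix_cmp a b w Hpa Hpb) as [P | P].
  - apply (HA a b Ha Hb E P).
  - apply (HA b a Hb Ha (fun e => E (eq_sym e)) P).
Qed.

Lemma map_prepend (a : list A) w j :
  map (prepend a w) (seq 0 (length a + j)) = a ++ map w (seq 0 j).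
Proof.
  induction a as [| x a IH]; simpl; auto.
  f_equal. rewrite <- seq_shift, map_map. simpl. auto.
Qed.

Lemma prepend_prefix (a : list A) w : inf_prefix a (prepend a w).
Proof.
  apply inf_prefix_map. rewrite <- (Nat.add_0_r (length a)), map_prepend. apply app_nil_r.
Qed.

Lemma prepend_drop (a : list A) w :
  inf_prefix a w -> prepend a (fun i => w (length a + i)%nat) = w.
Proof.
  intros H. apply functional_extensionality. revert w H.
  induction a as [| x a IH]; intros w H i; simpl; auto.
  destruct i as [| i].
  - specialize (H 0%nat ltac:(simpl; lia)). simpl in H. injection H; auto.
  - rewrite (IH (fun j => w (S j))); auto.
    intros j Hj. apply (H (S j)). simpl; lia.
Qed.

Lemma prefix_free_inj k (cw : nat -> list A) :
  (forall i j, (i < k)%nat -> (j < k)%nat -> word_prefix (cw i) (cw j) -> i = j) ->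
  forall i j, (i < k)%nat -> (j < k)%nat -> cw i = cw j -> i = j.
Proof. intros Hc i j Hi Hj E. apply Hc; auto. exists []. rewrite app_nil_r. auto. Qed.

Lemma complete_antichain_nodup (dec : forall a b : list A, {a = b} + {a <> b}) Ac :
  complete_antichain Ac -> complete_antichain (nodup dec Ac).
Proof.
  intros [Hanti Hcomp]. split.
  - intros v v' Hv Hv'. apply nodup_In in Hv, Hv'. auto.
  - intros w. destruct (Hcomp w) as [v [Hv Hp]]. exists v. rewrite nodup_In. auto.
Qed.

End Words.

Lemma in_map_seq {B : Type} (F : nat -> B) k y :
  In y (map F (seq 0 k)) <-> exists i, (i < k)%nat /\ F i = y.
Proof.
  rewrite in_map_iff. split.
  - intros [i [E Hi]]. apply in_seq in Hi. exists i. split; [lia | auto].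
  - intros [i [Hi E]]. exists i. split; [auto | apply in_seq; lia].
Qed.

Lemma reindex {A B : Type} k (aw : nat -> A) (bw : nat -> B) :
  (forall i j, (i < k)%nat -> (j < k)%nat -> aw i = aw j -> i = j) ->
  exists alpha : A -> B, forall i, (i < k)%nat -> alpha (aw i) = bw i.
Proof.
  intros Hinj. set (idx := fun v => epsilon (inhabits 0%nat) (fun i => (i < k)%nat /\ aw i = v)).
  exists (fun v => bw (idx v)). intros i Hi. f_equal.
  destruct (epsilon_spec (inhabits 0%nat) (fun j => (j < k)%nat /\ aw j = aw i)) as [H1 H2]; [eauto |].
  apply Hinj; auto.
Qed.

Lemma reindex_bijection {A B : Type} k (aw : nat -> A) (bw : nat -> B) :
  (forall i j, (i < k)%nat -> (j < k)%nat -> aw i = aw j -> i = j) ->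
  (forall i j, (i < k)%nat -> (j < k)%nat -> bw i = bw j -> i = j) ->
  exists alpha : A -> B, (forall i, (i < k)%nat -> alpha (aw i) = bw i) /\
    (forall v, In v (map aw (seq 0 k)) -> In (alpha v) (map bw (seq 0 k))) /\
    (forall v v', In v (map aw (seq 0 k)) -> In v' (map aw (seq 0 k)) -> alpha v = alpha v' -> v = v') /\
    (forall u, In u (map bw (seq 0 k)) -> exists v, In v (map aw (seq 0 k)) /\ alpha v = u).
Proof.
  intros Hinj1 Hinj2. destruct (reindex k aw bw Hinj1) as [alpha Halpha].
  exists alpha. split; [auto | split; [| split]].
  - intros v Hv. apply in_map_seq in Hv. destruct Hv as [i [Hi <-]].
    rewrite Halpha by auto. apply in_map_seq. eauto.
  - intros v v' Hv Hv' E. apply in_map_seq in Hv, Hv'.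
    destruct Hv as [i [Hi <-]], Hv' as [j [Hj <-]]. rewrite !Halpha in E by auto.
    f_equal. auto.
  - intros u Hu. apply in_map_seq in Hu. destruct Hu as [i [Hi <-]].
    exists (aw i). split; [apply in_map_seq; eauto | auto].
Qed.


Section StandardAction.
Local Open Scope R_scope.
Context {M : Type} (tau : Topology M) (M1 : M -> Prop) (f : M -> M).
Hypothesis Hcov : partial_self_covering tau M1 f.
Context (t : M) {d : nat} (tpt : X d -> M) (ell : X d -> R -> M).
Hypothesis Htinj : forall i j, tpt i = tpt j -> i = j.
Hypothesis Htfib : forall y, (M1 y /\ f y = t) <-> exists i, tpt i = y.
Hypothesis Hell : forall i, is_path tau (fun _ => True) (ell i) /\ ell i 0 = t /\ ell i 1 = tpt i.

Local Notation path g := (is_path tau (fun _ => True) g).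
Local Notation lend := (liftEnd tau M1 f).
Local Notation L := (Lam tau M1 f t ell).
Local Notation LI := (LamInf tau M1 f t ell).

Lemma tpt_vertex x : is_vertex M1 f t 1 (tpt x).
Proof. destruct (proj2 (Htfib (tpt x)) (ex_intro _ x eq_refl)). split; simpl; auto. Qed.

Lemma Lam_vertex a : is_vertex M1 f t (length a) (L a).
Proof.
  induction a as [| x a IH]; [split; simpl; auto |].
  destruct (Hell x) as [Hp [H0 H1]].
  replace (length (x :: a)) with (length a + 1)%nat by (simpl; lia).
  apply is_vertex_trans with (tpt x); [| apply tpt_vertex].
  rewrite <- H1. apply (liftEnd_vertex tau M1 f Hcov); auto. rewrite H0; auto.
Qed.

Lemma Lam_snoc a y : f (L (a ++ [y])) = L a.
Proof.
  destruct (Hell y) as [Hpy [Hy0 Hy1]].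
  induction a as [| x a IH]; simpl.
  - rewrite (liftEnd_eq tau M1 f Hcov 0 (ell y) t (tpt y)).
    + apply Htfib; eauto.
    + rewrite <- Hy0, <- Hy1. apply Lift_0; auto.
  - destruct (Hell x) as [Hp [H0 H1]].
    pose proof (Lam_vertex (a ++ [y])) as V. rewrite length_app, Nat.add_comm in V. simpl in V.
    pose proof (liftEnd_Lift tau M1 f Hcov (S (length a)) (ell x) _ Hp ltac:(rewrite H0; exact V)) as HL.
    apply (Lift_S tau M1 f Hcov) in HL. rewrite IH in HL. rewrite length_app, Nat.add_comm. simpl.
    symmetry. apply (liftEnd_eq tau M1 f Hcov). exact HL.
Qed.

(* Lambda is injective on each level: the first letter is read off the endpoint
   over t_i, and the rest by lifting the reversed path ell_i. *)
Lemma Lam_inj a b : length a = length b -> L a = L b -> a = b.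
Proof.
  revert b; induction a as [| x a IH]; intros [| y b] Hl He; simpl in *; try discriminate; auto.
  injection Hl as Hl.
  destruct (Hell x) as [Hpx [Hx0 Hx1]]. destruct (Hell y) as [Hpy [Hy0 Hy1]].
  assert (Va : is_vertex M1 f (ell x 0) (length a) (L a)) by (rewrite Hx0; apply Lam_vertex).
  assert (Vb : is_vertex M1 f (ell y 0) (length b) (L b)) by (rewrite Hy0; apply Lam_vertex).
  assert (Exy : x = y).
  { apply Htinj. rewrite <- Hx1, <- Hy1.
    destruct (liftEnd_vertex tau M1 f Hcov _ _ _ Hpx Va) as [_ <-].
    destruct (liftEnd_vertex tau M1 f Hcov _ _ _ Hpy Vb) as [_ <-].
    rewrite He, Hl. auto. }
  subst y. f_equal. apply IH; auto.
  rewrite <- (liftEnd_rev tau M1 f Hcov (length a) (ell x) (L a)), He, Hl by auto.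
  apply (liftEnd_rev tau M1 f Hcov); auto.
Qed.

(* Lambda is onto each level: the word is read off by lifting reversed paths. *)
Lemma Lam_surj n y : is_vertex M1 f t n y -> exists a, length a = n /\ L a = y.
Proof.
  revert y; induction n as [| n IH]; intros y Hy.
  - exists []. destruct Hy as [_ Hy]. auto.
  - replace (S n) with (n + 1)%nat in Hy by lia.
    destruct (is_vertex_split M1 f t n 1 y Hy) as [Vy [[Hp1 _] Hpt]].
    destruct (proj1 (Htfib (Nat.iter n f y)) (conj Hp1 Hpt)) as [x Hx].
    destruct (Hell x) as [Hp [H0 H1]].
    set (y' := lend n (rpath (ell x)) y).
    assert (Vy' : is_vertex M1 f t n y').
    { rewrite <- H0, <- rpath_1. apply (liftEnd_vertex tau M1 f Hcov); [apply is_path_rev; auto |].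
      rewrite rpath_0, H1, Hx. auto. }
    destruct (IH _ Vy') as [a [Ha1 Ha2]].
    exists (x :: a). split; simpl; [auto |]. rewrite Ha1, Ha2.
    apply (liftEnd_rev' tau M1 f Hcov); auto. rewrite H1, Hx. auto.
Qed.

(* delta a : a path from t to Lambda(a), obtained by concatenating the lifts
   of the letters of a; Lambda(a u) is the lift of delta a from Lambda(u). *)
Fixpoint delta (a : list (X d)) : R -> M :=
  match a with
  | [] => cpath t
  | x :: a' => ppath (delta a') (lpath tau M1 f (length a') (ell x) (L a'))
  end.

Lemma delta_spec a : path (delta a) /\ delta a 0 = t /\ delta a 1 = L a.
Proof.
  induction a as [| x a [IH1 [IH2 IH3]]]; simpl.
  - split; [apply is_path_const |]; unfold cpath; auto.
  - destruct (Hell x) as [Hp [H0 H1]].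
    destruct (lpath_spec tau M1 f Hcov (length a) (ell x) (L a) Hp ltac:(rewrite H0; apply Lam_vertex))
      as [[[A C] [E Z]] Hend].
    rewrite ppath_0, ppath_1. split; [| split]; auto.
    apply is_path_cat; auto. split; auto. congruence.
Qed.

Lemma Lam_app a u : L (a ++ u) = lend (length u) (delta a) (L u).
Proof.
  destruct (Lam_vertex u) as [Vu1 Vu2].
  induction a as [| x a IH]; simpl.
  - symmetry. apply (liftEnd_eq tau M1 f Hcov). rewrite <- Vu2 at 1. apply Lift_const; auto.
  - destruct (Hell x) as [Hp [H0 H1]]. destruct (delta_spec a) as [D1 [D2 D3]].
    destruct (lpath_spec tau M1 f Hcov (length a) (ell x) (L a) Hp ltac:(rewrite H0; apply Lam_vertex))
      as [HP HP1].
    symmetry. apply (liftEnd_eq tau M1 f Hcov).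
    assert (HL1 : Lift tau M1 f (length u) (delta a) (L u) (L (a ++ u))).
    { rewrite IH. apply (liftEnd_Lift tau M1 f Hcov); auto. split; congruence. }
    set (lp := lpath tau M1 f (length a) (ell x) (L a)) in *.
    assert (HL2 : Lift tau M1 f (length u) lp (L (a ++ u)) (lend (length u) lp (L (a ++ u)))).
    { destruct HP as [[A C] [_ Z]]. apply (liftEnd_Lift tau M1 f Hcov); [split; auto |].
      rewrite Z, <- D3. apply (Lift_end tau M1 f _ _ _ _ HL1). }
    replace (lend (length (a ++ u)) (ell x) (L (a ++ u))) with (lend (length u) lp (L (a ++ u))).
    + eapply Lift_cat; eauto.
    + symmetry. apply (liftEnd_eq tau M1 f Hcov). rewrite length_app, Nat.add_comm.
      eapply Lift_comp; eauto.
Qed.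

Lemma LamInf_vertex w n : is_vertex M1 f t n (LI w n).
Proof.
  unfold LamInf. pose proof (Lam_vertex (map w (seq 0 n))) as V.
  rewrite length_map, length_seq in V. exact V.
Qed.

Lemma LamInf_end w : is_end M1 f t (LI w).
Proof.
  split; [reflexivity |]. intros k. split.
  - destruct (LamInf_vertex w (S k)) as [[A _] _]. exact A.
  - unfold LamInf. rewrite seq_S, map_app. apply Lam_snoc.
Qed.

Definition wordOf n y : list (X d) := epsilon (inhabits []) (fun a => length a = n /\ L a = y).

Lemma wordOf_spec n y : is_vertex M1 f t n y -> length (wordOf n y) = n /\ L (wordOf n y) = y.
Proof. intros. unfold wordOf. apply epsilon_spec, Lam_surj; auto. Qed.

Lemma wordOf_Lam a : wordOf (length a) (L a) = a.
Proof. destruct (wordOf_spec _ _ (Lam_vertex a)). apply Lam_inj; auto. Qed.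

(* Lambda^{-1} on ends: the i-th letter is the last letter of the word
   naming the vertex of level i+1 (x0 is an arbitrary default letter). *)
Definition LamInv (x0 : X d) (xi : nat -> M) : nat -> X d :=
  fun i => last (wordOf (S i) (xi (S i))) x0.

Lemma LamInv_prefix x0 xi : is_end M1 f t xi ->
  forall n, map (LamInv x0 xi) (seq 0 n) = wordOf n (xi n).
Proof.
  intros He n. induction n as [| n IH].
  - simpl. destruct (wordOf_spec _ _ (end_vertex M1 f t xi He 0)) as [C _].
    destruct (wordOf 0 (xi 0%nat)); simpl in *; [auto | discriminate].
  - rewrite seq_S, map_app, IH. simpl.
    destruct (wordOf_spec _ _ (end_vertex M1 f t xi He (S n))) as [C D].
    destruct (exists_last (l := wordOf (S n) (xi (S n)))) as [c [y Hc]].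
    { intros E; rewrite E in C; discriminate. }
    unfold LamInv. rewrite Hc, last_last. f_equal.
    destruct (wordOf_spec _ _ (end_vertex M1 f t xi He n)) as [C' D'].
    apply Lam_inj.
    + rewrite Hc, length_app in C. simpl in C. lia.
    + rewrite D', <- (Lam_snoc c y), <- Hc, D. destruct He as [_ HS]. symmetry; apply HS.
Qed.

Lemma LamInf_LamInv x0 xi : is_end M1 f t xi -> LI (LamInv x0 xi) = xi.
Proof.
  intros He. apply functional_extensionality; intros n. unfold LamInf.
  rewrite LamInv_prefix; auto. apply wordOf_spec, end_vertex; auto.
Qed.

Lemma LamInv_LamInf x0 w : LamInv x0 (LI w) = w.
Proof.
  apply functional_extensionality; intros i. unfold LamInv, LamInf.
  pose proof (wordOf_Lam (map w (seq 0 (S i)))) as E. rewrite length_map, length_seq in E.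
  rewrite E, seq_S, map_app. apply last_last.
Qed.

Lemma LamInf_prefix a w : LI w (length a) = L a <-> inf_prefix a w.
Proof.
  rewrite inf_prefix_map. unfold LamInf. split.
  - intros H. apply Lam_inj; auto. rewrite length_map, length_seq; auto.
  - intros ->; auto.
Qed.

Lemma LamInf_prepend a w j : LI (prepend a w) (length a + j) = lend j (delta a) (LI w j).
Proof. unfold LamInf at 1. rewrite map_prepend, Lam_app, length_map, length_seq. auto. Qed.

Lemma LamInf_agree w w' i : (forall k, (k < i)%nat -> w k = w' k) -> LI w i = LI w' i.
Proof.
  intros H. unfold LamInf. f_equal. apply map_ext_in. intros a Ha. apply in_seq in Ha. apply H. lia.
Qed.

Local Notation Sg := (S_path tau M1 f).

Lemma S_path_prepend a b gam w z : path gam -> gam 0 = L a -> gam 1 = L b ->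
  (forall k, lend k (delta b) (LI z k) = lend k gam (lend k (delta a) (LI w k))) ->
  forall j, Sg (length a) (length b) (L b) gam (LI (prepend a w)) j = LI (prepend b z) j.
Proof.
  intros Hg Hg0 Hg1 Hyp j. destruct (Nat.lt_ge_cases j (length b)) as [H | H].
  - rewrite S_path_lt by auto.
    destruct (end_vertex_down M1 f t _ (LamInf_end (prepend b z)) j (length b - j)) as [_ B].
    replace (j + (length b - j))%nat with (length b) in B by lia.
    rewrite (proj2 (LamInf_prefix b (prepend b z)) (prepend_prefix b z)) in B. auto.
  - rewrite S_path_ge, LamInf_prepend, <- Hyp, <- LamInf_prepend by auto. f_equal. lia.
Qed.

Definition transport_loop a gam b : R -> M := ppath (ppath (rpath (delta a)) gam) (delta b).

Definition close_path a p b : R -> M := ppath (ppath (delta a) p) (rpath (delta b)).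

Lemma transport_loop_spec a gam b : path gam -> gam 0 = t -> gam 1 = t ->
  path (transport_loop a gam b) /\ transport_loop a gam b 0 = L a /\ transport_loop a gam b 1 = L b.
Proof.
  intros P G0 G1. destruct (delta_spec a) as [D1 [D2 D3]]. destruct (delta_spec b) as [E1 [E2 E3]].
  unfold transport_loop. rewrite !ppath_0, ppath_1, rpath_0. split; auto.
  apply is_path_cat; [apply is_path_cat; [apply is_path_rev | |] | | rewrite ppath_1]; auto;
    [rewrite rpath_1 |]; congruence.
Qed.

Lemma close_path_spec a p b : path p -> p 0 = L a -> p 1 = L b ->
  path (close_path a p b) /\ close_path a p b 0 = t /\ close_path a p b 1 = t.
Proof.
  intros P G0 G1. destruct (delta_spec a) as [D1 [D2 D3]]. destruct (delta_spec b) as [E1 [E2 E3]].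
  unfold close_path. rewrite !ppath_0, ppath_1, rpath_1. split; auto.
  apply is_path_cat; [apply is_path_cat | apply is_path_rev | rewrite ppath_1, rpath_0]; auto;
    congruence.
Qed.

Lemma transport_loop_action a b gam w z : path gam -> gam 0 = t -> gam 1 = t ->
  (forall j, LI z j = Sg 0 0 t gam (LI w) j) ->
  forall j, Sg (length a) (length b) (L b) (transport_loop a gam b) (LI (prepend a w)) j =
            LI (prepend b z) j.
Proof.
  intros P G0 G1 Hz. destruct (transport_loop_spec a gam b P G0 G1) as [T1 [T2 T3]].
  destruct (delta_spec a) as [D1 [D2 D3]]. destruct (delta_spec b) as [E1 [E2 E3]].
  apply S_path_prepend; auto. intros k.
  assert (Vw : is_vertex M1 f (delta a 0) k (LI w k)) by (rewrite D2; apply LamInf_vertex).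
  pose proof (liftEnd_vertex tau M1 f Hcov k _ _ D1 Vw) as Va.
  rewrite Hz, S_path_ge, Nat.sub_0_r by lia. unfold transport_loop.
  rewrite liftEnd_cat3, liftEnd_rev; auto.
  - apply is_path_rev; auto.
  - rewrite rpath_1; congruence.
  - congruence.
  - rewrite rpath_0; auto.
Qed.

Lemma close_path_action a b p w z : path p -> p 0 = L a -> p 1 = L b ->
  (forall j, LI z j = Sg 0 0 t (close_path a p b) (LI w) j) ->
  forall j, Sg (length a) (length b) (L b) p (LI (prepend a w)) j = LI (prepend b z) j.
Proof.
  intros P G0 G1 Hz. destruct (delta_spec a) as [D1 [D2 D3]]. destruct (delta_spec b) as [E1 [E2 E3]].
  apply S_path_prepend; auto. intros k.
  assert (Vw : is_vertex M1 f (delta a 0) k (LI w k)) by (rewrite D2; apply LamInf_vertex).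
  pose proof (liftEnd_vertex tau M1 f Hcov k _ _ D1 Vw) as Va. rewrite D3, <- G0 in Va.
  pose proof (liftEnd_vertex tau M1 f Hcov k _ _ P Va) as Vp.
  rewrite Hz, S_path_ge, Nat.sub_0_r by lia. unfold close_path.
  rewrite liftEnd_cat3, liftEnd_rev'; auto.
  - rewrite E3, <- G1. exact Vp.
  - apply is_path_rev; auto.
  - congruence.
  - rewrite rpath_0; congruence.
Qed.

(* From now on the alphabet is nonempty, with a letter x0 fixed to define
   Lambda^{-1} on ends. *)
Context (x0 : X d).
Local Notation Linv := (LamInv x0).

Lemma seq_cont_conj_ends g : seq_cont (fun _ => True) g ->
  seq_cont (is_end M1 f t) (fun xi => LI (g (Linv xi))).
Proof.
  intros C xi Hxi n. destruct (C (Linv xi) I n) as [m Hm]. exists (S m).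
  intros xi' Hxi' Hag i Hi. apply LamInf_agree. intros k Hk. apply Hm; [auto | | lia].
  intros q Hq. unfold LamInv. rewrite Hag; [auto | lia].
Qed.

Lemma seq_cont_conj_words h : seq_cont (is_end M1 f t) h ->
  seq_cont (fun _ => True) (fun w => Linv (h (LI w))).
Proof.
  intros C w _ n. destruct (C (LI w) (LamInf_end w) (S n)) as [m Hm]. exists m.
  intros w' _ Hag i Hi. unfold LamInv. rewrite Hm; [auto | apply LamInf_end | | lia].
  intros q Hq. apply LamInf_agree. intros k Hk. apply Hag. lia.
Qed.

Lemma homeo_conj_ends g : homeo_on (fun _ => True) g ->
  homeo_on (is_end M1 f t) (fun xi => LI (g (Linv xi))).
Proof.
  intros [_ [gi [_ [Hgig [Hggi [Cg Cgi]]]]]].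
  assert (Egig : forall w, gi (g w) = w) by (intros w; apply functional_extensionality; auto).
  assert (Eggi : forall w, g (gi w) = w) by (intros w; apply functional_extensionality; auto).
  split; [intros; apply LamInf_end |].
  exists (fun xi => LI (gi (Linv xi))). split; [intros; apply LamInf_end |].
  split; [| split; [| split]].
  - intros xi Hxi n. rewrite LamInv_LamInf, Egig, LamInf_LamInv; auto.
  - intros xi Hxi n. rewrite LamInv_LamInf, Eggi, LamInf_LamInv; auto.
  - apply seq_cont_conj_ends; auto.
  - apply seq_cont_conj_ends; auto.
Qed.

Lemma homeo_conj_words h : homeo_on (is_end M1 f t) h ->
  homeo_on (fun _ => True) (fun w => Linv (h (LI w))).
Proof.
  intros [Hhe [hi [Hhie [Hhih [Hhhi [Ch Chi]]]]]].
  assert (Ehih : forall xi, is_end M1 f t xi -> hi (h xi) = xi)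
    by (intros; apply functional_extensionality; auto).
  assert (Ehhi : forall xi, is_end M1 f t xi -> h (hi xi) = xi)
    by (intros; apply functional_extensionality; auto).
  split; [auto |]. exists (fun w => Linv (hi (LI w))). split; [auto |].
  split; [| split; [| split]].
  - intros w _ n. rewrite LamInf_LamInv, Ehih, LamInv_LamInf; auto using LamInf_end.
  - intros w _ n. rewrite LamInf_LamInv, Ehhi, LamInv_LamInf; auto using LamInf_end.
  - apply seq_cont_conj_words; auto.
  - apply seq_cont_conj_words; auto.
Qed.

Local Notation partition := (boundary_partition M1 f t).
Local Notation piece_map := (piece_map tau M1 f).

Lemma subtree_LamInf n v w : is_vertex M1 f t n v ->
  in_subtree_bd M1 f t n v (LI w) <-> inf_prefix (wordOf n v) w.
Proof.
  intros Hv. destruct (wordOf_spec n v Hv) as [A B].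
  unfold in_subtree_bd. rewrite <- LamInf_prefix, A, B.
  split; [tauto | split; auto using LamInf_end].
Qed.

Lemma antichain_partition Ac : complete_antichain Ac -> NoDup Ac ->
  partition (length Ac) (fun i => length (nth i Ac [])) (fun i => L (nth i Ac [])).
Proof.
  intros HA Hnd xi Hxi. set (w := Linv xi).
  assert (Exi : LI w = xi) by (apply LamInf_LamInv; auto).
  destruct (proj2 HA w) as [v [Hv Hpv]]. destruct (In_nth Ac v [] Hv) as [i [Hi Hni]].
  exists i. split; [auto | split].
  - split; auto. rewrite Hni, <- Exi. apply LamInf_prefix; auto.
  - intros j Hj [_ Hsj]. apply (NoDup_nth Ac []); auto. rewrite Hni.
    apply (antichain_eq Ac _ v w HA); auto using nth_In.
    apply LamInf_prefix. rewrite Exi. auto.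
Qed.

Lemma partition_antichain k n v :
  (forall i, (i < k)%nat -> is_vertex M1 f t (n i) (v i)) -> partition k n v ->
  complete_antichain (map (fun i => wordOf (n i) (v i)) (seq 0 k)) /\
  (forall i j, (i < k)%nat -> (j < k)%nat ->
     word_prefix (wordOf (n i) (v i)) (wordOf (n j) (v j)) -> i = j).
Proof.
  intros Hv Hpart. set (aw := fun i => wordOf (n i) (v i)).
  assert (Hprefix : forall i j, (i < k)%nat -> (j < k)%nat -> word_prefix (aw i) (aw j) -> i = j).
  { intros i j Hi Hj Hp. set (xi := LI (prepend (aw j) (fun _ => x0))).
    assert (Sj : in_subtree_bd M1 f t (n j) (v j) xi) by (apply subtree_LamInf, prepend_prefix; auto).
    assert (Si : in_subtree_bd M1 f t (n i) (v i) xi)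
      by (apply subtree_LamInf; [auto | eapply prefix_inf; [exact Hp | apply prepend_prefix]]).
    destruct (Hpart xi (proj1 Sj)) as [l [_ [_ Uniq]]].
    rewrite (Uniq i Hi Si), (Uniq j Hj Sj). auto. }
  split; [split |]; auto.
  - intros a b Ha Hb Hne Hp. apply in_map_seq in Ha, Hb.
    destruct Ha as [i [Hi <-]], Hb as [j [Hj <-]]. apply Hne. f_equal. auto.
  - intros w. destruct (Hpart (LI w) (LamInf_end w)) as [i [Hi [Si _]]].
    exists (aw i). split; [apply in_map_seq; eauto | apply subtree_LamInf; auto].
Qed.

Definition loop_acts (g : (nat -> X d) -> nat -> X d) v u (gam : R -> M) : Prop :=
  path gam /\ gam 0 = t /\ gam 1 = t /\
  forall w, exists z, (forall n, g (prepend v w) n = prepend u z n) /\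
                      (forall n, LI z n = Sg 0 0 t gam (LI w) n).

(* Direction V_G -> V_f: g is read on the cylinders of an antichain A1;
   each cylinder v is moved by a loop acting at the root, and the transported
   loop delta(v)^{-1} gamma delta(alpha v) is a piece of Lambda g Lambda^{-1}. *)
Lemma VIMG_to_Vf g : in_VIMG tau M1 f t ell g ->
  exists h, in_Vf tau M1 f t h /\ forall w n, h (LI w) n = LI (g w) n.
Proof.
  intros [Hhomeo [A1 [A2 [alpha [HA1 [_ [_ [_ [_ Hloop]]]]]]]]].
  set (gamOf := fun v => epsilon (inhabits (cpath t)) (loop_acts g v (alpha v))).
  assert (HgamOf : forall v, In v A1 -> loop_acts g v (alpha v) (gamOf v))
    by (intros v Hv; apply epsilon_spec, Hloop, Hv).
  set (Ac := nodup (fun a b => excluded_middle_informative (a = b)) A1).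
  set (vv := fun i => nth i Ac []).
  assert (HvvA : forall i, (i < length Ac)%nat -> In (vv i) A1)
    by (intros i Hi; eapply nodup_In, nth_In, Hi).
  set (P := fun i => {| p_n := length (vv i); p_v := L (vv i); p_m := length (alpha (vv i));
                        p_u := L (alpha (vv i));
                        p_g := transport_loop (vv i) (gamOf (vv i)) (alpha (vv i)) |}).
  exists (fun xi => LI (g (Linv xi))). split.
  2:{ intros w n. rewrite LamInv_LamInf. auto. }
  split; [apply homeo_conj_ends; auto |].
  exists (length Ac), P. split; [| split].
  - intros i Hi. destruct (HgamOf (vv i) (HvvA i Hi)) as [Pg [G0 [G1 _]]].
    destruct (transport_loop_spec (vv i) _ (alpha (vv i)) Pg G0 G1) as [T1 [T2 T3]].
    simpl. split; [apply Lam_vertex | split; [apply Lam_vertex | auto]].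
  - apply antichain_partition; [apply complete_antichain_nodup; auto | apply NoDup_nodup].
  - intros i Hi xi [Hxi Hsub] j. simpl in *. set (v := vv i) in *.
    set (w := Linv xi). assert (Exi : LI w = xi) by (apply LamInf_LamInv; auto).
    assert (Ew : prepend v (fun q => w (length v + q)%nat) = w)
      by (apply prepend_drop, LamInf_prefix; rewrite Exi; auto).
    destruct (HgamOf v (HvvA i Hi)) as [Pg [G0 [G1 Hact]]].
    destruct (Hact (fun q => w (length v + q)%nat)) as [z [Hz1 Hz2]].
    rewrite Ew in Hz1. apply functional_extensionality in Hz1.
    fold w. rewrite Hz1, <- Exi, <- Ew. symmetry. apply transport_loop_action; auto.
Qed.

Lemma piece_loop_acts h a b p : path p -> p 0 = L a -> p 1 = L b ->
  (forall w, h (LI (prepend a w)) = Sg (length a) (length b) (L b) p (LI (prepend a w))) ->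
  loop_acts (fun w => Linv (h (LI w))) a b (close_path a p b).
Proof.
  intros Pg G0 G1 Hh. destruct (close_path_spec a p b Pg G0 G1) as [C1 [C2 C3]].
  split; [| split; [| split]]; auto. intros w.
  set (xi := Sg 0 0 t (close_path a p b) (LI w)).
  destruct (S_path_end tau M1 f Hcov t 0 0 t _ (LI w) (LamInf_end w)
              ltac:(split; simpl; auto) C1 C2 C3) as [XE _].
  exists (Linv xi). split; [| intros n; rewrite LamInf_LamInv; auto].
  assert (Hz : forall j, LI (Linv xi) j = xi j) by (intros j; rewrite LamInf_LamInv; auto).
  intros n. rewrite Hh, (functional_extensionality _ _ (close_path_action a b p w _ Pg G0 G1 Hz)).
  rewrite LamInv_LamInf. reflexivity.
Qed.

(* Direction V_f -> V_G: the pieces of h name, through Lambda, two complete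
   antichains (the sources, and the targets, which partition the boundary
   since h is a bijection); each piece p, closed up by delta, is a loop at
   t realising Lambda^{-1} h Lambda on the corresponding cylinder. *)
Lemma Vf_to_VIMG h : in_Vf tau M1 f t h ->
  exists g, in_VIMG tau M1 f t ell g /\ forall w n, h (LI w) n = LI (g w) n.
Proof.
  intros [Hhomeo [k [P [HP [Hpart Hpiece]]]]].
  pose proof Hhomeo as [Hhe [hi [Hhie [Hhih [Hhhi _]]]]].
  assert (Hpiece' : forall i, (i < k)%nat -> forall xi,
            in_subtree_bd M1 f t (p_n (P i)) (p_v (P i)) xi -> h xi = piece_map (P i) xi)
    by (intros i Hi xi Hxi; apply functional_extensionality; intros j; apply Hpiece; auto).
  assert (Hpart' : partition k (fun i => p_m (P i)) (fun i => p_u (P i))).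
  { apply (target_partition tau M1 f Hcov t k P h hi); auto;
      intros; apply functional_extensionality; auto. }
  set (aw := fun i => wordOf (p_n (P i)) (p_v (P i))).
  set (bw := fun i => wordOf (p_m (P i)) (p_u (P i))).
  assert (Haw : forall i, (i < k)%nat -> length (aw i) = p_n (P i) /\ L (aw i) = p_v (P i))
    by (intros i Hi; apply wordOf_spec, (HP i Hi)).
  assert (Hbw : forall i, (i < k)%nat -> length (bw i) = p_m (P i) /\ L (bw i) = p_u (P i))
    by (intros i Hi; apply wordOf_spec, (HP i Hi)).
  destruct (partition_antichain k _ _ (fun i Hi => proj1 (HP i Hi)) Hpart) as [HA1 Hinj1].
  destruct (partition_antichain k _ _ (fun i Hi => proj1 (proj2 (HP i Hi))) Hpart') as [HA2 Hinj2].
  fold aw in HA1, Hinj1. fold bw in HA2, Hinj2.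
  destruct (reindex_bijection k aw bw (prefix_free_inj k aw Hinj1) (prefix_free_inj k bw Hinj2))
    as [alpha [Halpha Hbij]].
  exists (fun w => Linv (h (LI w))). split.
  2:{ intros w n. rewrite LamInf_LamInv; auto using LamInf_end. }
  split; [apply homeo_conj_words; auto |].
  exists (map aw (seq 0 k)), (map bw (seq 0 k)), alpha.
  do 2 (split; [auto |]). split; [apply Hbij | split; [apply Hbij | split; [apply Hbij |]]].
  intros v Hv. apply in_map_seq in Hv. destruct Hv as [i [Hi <-]]. rewrite Halpha by auto.
  destruct (HP i Hi) as [_ [_ [Pg [G0 G1]]]].
  destruct (Haw i Hi) as [Alen AL]. destruct (Hbw i Hi) as [Blen BL].
  exists (close_path (aw i) (p_g (P i)) (bw i)).
  apply piece_loop_acts; [auto | congruence | congruence |]. intros w.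
  rewrite (Hpiece' i); [unfold piece_map; rewrite <- Alen, <- Blen, <- BL; reflexivity | auto |].
  rewrite <- Alen, <- AL. apply subtree_LamInf; [apply Lam_vertex |].
  rewrite wordOf_Lam. apply prepend_prefix.
Qed.

End StandardAction.

(* With an empty alphabet, X^omega and the boundary of T_t are both empty,
   so both groups are trivial and the identities correspond. *)
Lemma empty_alphabet {M} (tau : Topology M) M1 f t d (ell : X d -> R -> M) :
  ~ inhabited (X d) -> (forall y, M1 y /\ f y = t -> inhabited (X d)) ->
  (forall h, in_Vf tau M1 f t h ->
     exists g, in_VIMG tau M1 f t ell g /\
       forall w n, h (LamInf tau M1 f t ell w) n = LamInf tau M1 f t ell (g w) n) /\
  (forall g, in_VIMG tau M1 f t ell g ->
     exists h, in_Vf tau M1 f t h /\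
       forall w n, h (LamInf tau M1 f t ell w) n = LamInf tau M1 f t ell (g w) n).
Proof.
  intros Hempty Hfib.
  assert (Hw : forall w : nat -> X d, False) by (intros w; exact (Hempty (inhabits (w 0%nat)))).
  assert (Hxi : forall xi, is_end M1 f t xi -> False).
  { intros xi [H0 HS]. destruct (HS 0%nat) as [A B]. rewrite H0 in B. exact (Hempty (Hfib _ (conj A B))). }
  split.
  - intros h _. exists (fun w => w). split; [| intros w; destruct (Hw w)].
    split; [split; [auto | exists (fun w => w)] |].
    + split; [auto |]. repeat split; intros w; destruct (Hw w).
    + assert (CA : @complete_antichain (X d) [[]]).
      { split; [| intros w; destruct (Hw w)].
        intros v v' [<- | []] [<- | []] Hne. destruct (Hne eq_refl). }
      exists [[]], [[]], (fun v => v). do 4 (split; [auto |]). split; [eauto |].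
      intros v _. exists (cpath t). split; [apply is_path_const; auto |].
      split; [auto | split; [auto | intros w; destruct (Hw w)]].
  - intros g _. exists (fun xi => xi). split; [| intros w; destruct (Hw w)].
    split; [split; [auto | exists (fun xi => xi)] |].
    + split; [auto |]. repeat split; intros xi H; destruct (Hxi xi H).
    + exists 0%nat, (fun _ => {| p_n := 0; p_v := t; p_m := 0; p_u := t; p_g := cpath t |}).
      split; [intros i Hi; lia | split; [intros xi H; destruct (Hxi xi H) | intros i Hi; lia]].
Qed.

Theorem mainTheorem16 (M : Type) (tau : Topology M) (M1 : M -> Prop)
  (f : M -> M) (t : M) (d : nat) (tpt : X d -> M) (ell : X d -> R -> M)
  (Hcov : partial_self_covering tau M1 f)
  (Hpc : path_connected tau)
  (Htinj : forall i j, tpt i = tpt j -> i = j)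
  (Htfib : forall y, (M1 y /\ f y = t) <-> exists i, tpt i = y)
  (Hell : forall i, is_path tau (fun _ => True) (ell i) /\
                    ell i 0%R = t /\ ell i 1%R = tpt i) :
  (forall h, in_Vf tau M1 f t h ->
     exists g, in_VIMG tau M1 f t ell g /\
       forall w n, h (LamInf tau M1 f t ell w) n = LamInf tau M1 f t ell (g w) n) /\
  (forall g, in_VIMG tau M1 f t ell g ->
     exists h, in_Vf tau M1 f t h /\
       forall w n, h (LamInf tau M1 f t ell w) n = LamInf tau M1 f t ell (g w) n).
Proof.
  destruct (classic (inhabited (X d))) as [[x0] | Hempty].
  - split.
    + intros h Hh. exact (Vf_to_VIMG tau M1 f Hcov t tpt ell Htinj Htfib Hell x0 h Hh).
    + intros g Hg. exact (VIMG_to_Vf tau M1 f Hcov t tpt ell Htinj Htfib Hell x0 g Hg).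
  - apply empty_alphabet; auto.
    intros y Hy. destruct (proj1 (Htfib y) Hy) as [i _]. exact (inhabits i).
Qed.
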